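(* Under the fixed admissible embedding $K\hookrightarrow M_2(\mathbb{Q})$, let $h_0$ be the point of the upper half plane fixed by $K^\times$ and write the image of $\varpi_c=\frac{cD+c\sqrt{D}}{2}$ as $\begin{pmatrix} x & y\\ z & w\end{pmatrix}$. Then $K=\mathbb{Q}+\mathbb{Q}h_0$ and $\mathcal{O}_c=\mathbb{Z}+\mathbb{Z}\, y h_0^{-1}$.
   Context: $K$ is an imaginary quadratic field of discriminant $D$, $c$ is a positive integer coprime to $N=N_0N_1^2$, and $\mathcal{O}_c=\mathbb{Z}+c\mathcal{O}_K=\mathbb{Z}+\mathbb{Z}\varpi_c$ with $\varpi_c=\frac{cD+c\sqrt{D}}{2}$. The embedding $K\hookrightarrow M_2(\mathbb{Q})$ is admissible, i.e. $K\cap M_2(\mathbb{Z})=K\cap R_0(N_0)=\mathcal{O}_c$, where $R_0(N_0)$ is the set of integer matrices that are upper triangular mod $N_0$. The entry $z$ is nonzero since $K$ is a field. *)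

(* K is modelled as the subfield Q(sqrt D) of algC. *)
From HB Require Import structures.
From mathcomp Require Import all_boot all_order all_algebra all_field.
Set Implicit Arguments. Unset Strict Implicit. Unset Printing Implicit Defensive.
Import Order.TTheory GRing.Theory Num.Theory.
Local Open Scope ring_scope.

Definition sqfree_int (m : int) : Prop :=
  forall d : int, (d * d %| m)%Z -> `|d| = 1.

Definition fund_disc (D : int) : Prop :=
  ((D %% 4)%Z = 1 /\ sqfree_int D) \/
  (exists m : int, D = 4 * m /\ ((m %% 4)%Z = 2 \/ (m %% 4)%Z = 3) /\ sqfree_int m).

(* sqrt D in C, principal branch (for D < 0 : i sqrt|D|) *)
Definition sqrtD (D : int) : algC := sqrtC (D%:~R).

Definition Kset (D : int) (a : algC) : Prop :=
  exists p q : rat, a = ratr p + ratr q * sqrtD D.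

Definition varpi (D : int) (c : nat) : algC :=
  (c%:R * D%:~R + c%:R * sqrtD D) / 2%:R.

Definition Oc (D : int) (c : nat) (a : algC) : Prop :=
  exists m n : int, a = m%:~R + n%:~R * varpi D c.

Definition i0 : 'I_2 := ord0.
Definition i1 : 'I_2 := ord_max.

Definition int_mx (A : 'M[rat]_2) : Prop := forall i j, A i j \is a Num.int.

Definition R0 (N0 : nat) (A : 'M[rat]_2) : Prop :=
  int_mx A /\ exists k : int, A i1 i0 = ((N0%:Z * k)%R)%:~R.

Definition ring_emb (D : int) (phi : algC -> 'M[rat]_2) : Prop :=
  phi 1 = 1 /\
  (forall a b, Kset D a -> Kset D b -> phi (a + b) = phi a + phi b) /\
  (forall a b, Kset D a -> Kset D b -> phi (a * b) = phi a * phi b).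

(* admissibility: K ∩ M_2(Z) = K ∩ R_0(N0) = O_c (K identified with its image) *)
Definition admissible (D : int) (c N0 : nat) (phi : algC -> 'M[rat]_2) : Prop :=
  forall A : 'M[rat]_2, (exists a, Kset D a /\ A = phi a) ->
    (int_mx A <-> exists a, Oc D c a /\ A = phi a) /\
    (R0 N0 A <-> exists a, Oc D c a /\ A = phi a).

Definition mobius (A : 'M[rat]_2) (h : algC) : algC :=
  (ratr (A i0 i0) * h + ratr (A i0 i1)) / (ratr (A i1 i0) * h + ratr (A i1 i1)).

From HB Require Import structures.
From mathcomp Require Import all_boot all_order all_algebra all_field.
From mathcomp Require Import ring zify.
Set Implicit Arguments. Unset Strict Implicit.
Import Order.TTheory GRing.Theory Num.Theory.
Local Open Scope ring_scope.

(* W := phi(varpi_c) satisfies (2W - cD)^2 = c^2 D, so tr W = cD and disc W = c^2 D < 0,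
   which forces the lower-left entry z of W to be nonzero.  A fixed point h0 of W makes
   (h0, 1) an eigenvector with eigenvalue l = z h0 + w, hence (2l - cD)^2 = c^2 D and l is
   varpi_c or its conjugate cD - varpi_c.  Then h0 = (l - w)/z generates K over Q, and
   y/h0 = l - x is +-varpi_c plus an integer (x, w are integers by admissibility), so it
   generates O_c over Z. *)

Lemma mulmx2E (R : pzRingType) (A B : 'M[R]_2) (i j : 'I_2) :
  (A * B) i j = A i i0 * B i0 j + A i i1 * B i1 j.
Proof.
rewrite -mulmxE mxE big_ord_recl big_ord1.
by have -> : lift ord0 ord0 = i1 by apply: val_inj.
Qed.

Lemma mx2_trace_disc_of_sqr (R : realDomainType) (W : 'M[R]_2) (t d : R) :
  (W *+ 2 - t%:M) ^+ 2 = d%:M -> d < 0 ->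
  [/\ W i1 i0 != 0, W i0 i0 + W i1 i1 = t
    & (W i0 i0 - W i1 i1) ^+ 2 + 4 * (W i0 i1 * W i1 i0) = d].
Proof.
move=> sqW d_lt0; have entry i j := congr1 (fun A : 'M[R]_2 => A i j) sqW.
have := entry i0 i0; have := entry i1 i0.
rewrite /= expr2 !mulmx2E !mxE /= !mulr1n !mulr0n !subr0.
set x := W i0 i0; set y := W i0 i1; set z := W i1 i0; set w := W i1 i1.
move=> e10 e00.
have z_neq0 : z != 0.
  apply: contraTneq d_lt0 => z0; rewrite -e00 z0 !(mul0rn, mulr0n, mulr0, addr0) -leNgt.
  by rewrite -expr2 sqr_ge0.
have trW : x + w = t.
  apply/eqP; rewrite -subr_eq0; apply/eqP.
  apply: (mulfI (_ : z *+ 4 != 0)); first by rewrite mulrn_eq0.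
  by rewrite mulr0 -e10; ring.
split=> //; rewrite -e00 -trW; ring.
Qed.

Lemma fixed_point_discriminant (R : comPzRingType) (a b c d h : R) :
  a * h + b = (c * h + d) * h ->
  (2 * (c * h + d) - (a + d)) ^+ 2 = (a - d) ^+ 2 + 4 * (b * c).
Proof.
move=> fix_h; have -> : b = (c * h + d) * h - a * h by rewrite -fix_h addrC addKr.
ring.
Qed.

Lemma mobius_fixed (A : 'M[rat]_2) (h : algC) : mobius A h = h -> h != 0 ->
  ratr (A i0 i0) * h + ratr (A i0 i1) = (ratr (A i1 i0) * h + ratr (A i1 i1)) * h.
Proof.
rewrite /mobius; set num := ratr _ * h + _; set den := ratr _ * h + _ => fix_h.
have [den0|den_neq0 _] := eqVneq den 0.
  by rewrite -fix_h den0 invr0 mulr0 eqxx.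
by rewrite -[in RHS]fix_h mulrC divfK.
Qed.

Lemma rat_span_change (F : numFieldType) (s h : F) (r q : rat) :
  q != 0 -> h = ratr r + ratr q * s -> forall a : F,
  (exists p p' : rat, a = ratr p + ratr p' * s) <->
  (exists p p' : rat, a = ratr p + ratr p' * h).
Proof.
move=> q_neq0 hE a; split=> -[p [p' ->]].
  exists (p - p' * r / q), (p' / q); rewrite hE !(rmorphB, rmorphM, fmorphV) /=.
  by field; rewrite fmorph_eq0.
by exists (p + p' * r), (p' * q); rewrite hE !(rmorphD, rmorphM) /=; ring.
Qed.

Lemma int_span_shift (R : comPzRingType) (v u : R) (k e : int) :
  e * e = 1 -> u = k%:~R + e%:~R * v -> forall a : R,
  (exists m n : int, a = m%:~R + n%:~R * v) <->
  (exists m n : int, a = m%:~R + n%:~R * u).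
Proof.
move=> ee uE a; have ee' : e%:~R * e%:~R = 1 :> R by rewrite -intrM ee.
split=> -[m [n ->]].
  exists (m - n * e * k), (n * e).
  rewrite uE !(intrB, intrM); ring: ee'.
by exists (m + n * k), (n * e); rewrite uE !(intrD, intrM); ring.
Qed.

Lemma ratr_int_mx_entry (A : 'M[rat]_2) (i j : 'I_2) :
  int_mx A -> exists k : int, ratr (A i j) = k%:~R :> algC.
Proof. by move/(_ i j)/intrP=> [k ->]; exists k; rewrite ratr_int. Qed.

Section QuadraticField.
Variable D : int.
Local Notation s := (sqrtD D).

Lemma sqrtD_sqr : s ^+ 2 = D%:~R.
Proof. exact: sqrtCK. Qed.

Lemma Kset_int (k : int) : Kset D k%:~R.
Proof. by exists k%:~R, 0; rewrite ratr_int rmorph0 mul0r addr0. Qed.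

Lemma Kset_nat_sqrtD (n : nat) : Kset D (n%:R * s).
Proof. by exists 0, n%:R; rewrite rmorph0 add0r ratr_nat. Qed.

Lemma KsetB (a b : algC) : Kset D a -> Kset D b -> Kset D (a - b).
Proof.
by move=> [p [q ->]] [p' [q' ->]]; exists (p - p'), (q - q'); rewrite !rmorphB; ring.
Qed.

Variable c : nat.

Lemma varpiE : varpi D c = ratr ((c%:Z * D)%:~R / 2) + ratr (c%:R / 2) * s.
Proof. by rewrite /varpi !(rmorphM, fmorphV, rmorph_int, rmorph_nat); field. Qed.

Lemma Kset_varpi : Kset D (varpi D c).
Proof. by rewrite varpiE; do 2!eexists. Qed.

Lemma varpi_add_varpi : varpi D c + varpi D c = (c%:Z * D)%:~R + c%:R * s.
Proof. by rewrite /varpi intrM; field. Qed.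

Lemma Oc_varpi : Oc D c (varpi D c).
Proof. by exists 0, 1; rewrite mul1r add0r. Qed.

Lemma sqr_eq_varpi (l : algC) :
  (2 * l - (c%:Z * D)%:~R) ^+ 2 = (c%:Z ^+ 2 * D)%:~R ->
  l = varpi D c \/ l = (c%:Z * D)%:~R - varpi D c.
Proof.
have -> : (c%:Z ^+ 2 * D)%:~R = (c%:R * s) ^+ 2 :> algC.
  by rewrite exprMn sqrtD_sqr intrM rmorphXn.
have lE : l = (2 * l - (c%:Z * D)%:~R + (c%:Z * D)%:~R) / 2 by field.
move/eqP; rewrite eqf_sqr => /orP[] /eqP l2E; [left | right];
  by rewrite lE l2E /varpi intrM; field.
Qed.

Hypotheses (D_lt0 : D < 0) (c_gt0 : (0 < c)%N).

Lemma varpi_neq0 : varpi D c != 0.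
Proof.
apply/eqP => varpi0.
have sD : s = - D%:~R.
  have : c%:R * (D%:~R + s) = 2 * varpi D c by rewrite /varpi; field.
  rewrite varpi0 mulr0 => /eqP; rewrite mulf_eq0 pnatr_eq0 eqn0Ngt c_gt0 /=.
  by rewrite addrC addr_eq0 => /eqP.
have : (D * D)%:~R = D%:~R :> algC by rewrite -sqrtD_sqr sD intrM; ring.
by move/intr_inj; nia.
Qed.

Lemma varpi_or_conj_coord (l : algC) :
  l = varpi D c \/ l = (c%:Z * D)%:~R - varpi D c ->
  exists r : rat, exists2 q : rat, q != 0 & l = ratr r + ratr q * s.
Proof.
have c2_neq0 : c%:R / 2 != 0 :> rat by rewrite mulf_neq0 ?invr_eq0 ?pnatr_eq0 -?lt0n.
case=> ->; [exists ((c%:Z * D)%:~R / 2), (c%:R / 2) |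
             exists ((c%:Z * D)%:~R / 2), (- (c%:R / 2))]; rewrite ?oppr_eq0 //;
  by rewrite /varpi !(rmorphM, rmorphN, fmorphV, rmorph_int, rmorph_nat); field.
Qed.

End QuadraticField.

Section Embedding.
Variables (D : int) (phi : algC -> 'M[rat]_2).
Hypothesis phi_emb : ring_emb D phi.

Lemma phi_int (k : int) : phi k%:~R = (k%:~R)%:M.
Proof.
have [phi1 [phiD _]] := phi_emb; rewrite (rmorph_int (@scalar_mx rat 2)).
have K1 : Kset D 1 := Kset_int D 1.
have phiB a b (Ka : Kset D a) (Kb : Kset D b) : phi (a - b) = phi a - phi b.
  by rewrite -[in RHS](subrK b a) (phiD _ _ (KsetB Ka Kb) Kb) addrK.
have phi0 : phi 0 = 0 by rewrite -(subrr (1 : algC)) phiB // subrr.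
have phi_nat n : phi n%:R = n%:R.
  elim: n => [|n IHn]; first exact: phi0.
  by rewrite -natr1 (phiD _ _ (Kset_int D n) K1) IHn phi1 natr1.
case: k => n; first exact: phi_nat.
by rewrite NegzE !mulrNz -sub0r (phiB _ _ (Kset_int D 0) (Kset_int D n.+1)) phi0 phi_nat sub0r.
Qed.

Lemma phi_varpi_sqr (c : nat) :
  (phi (varpi D c) *+ 2 - ((c%:Z * D)%:~R)%:M) ^+ 2 = ((c%:Z ^+ 2 * D)%:~R)%:M.
Proof.
have [_ [phiD phiM]] := phi_emb.
have phi_cs : phi (c%:R * sqrtD D) = phi (varpi D c) *+ 2 - ((c%:Z * D)%:~R)%:M.
  have := phiD _ _ (Kset_varpi D c) (Kset_varpi D c).
  rewrite varpi_add_varpi (phiD _ _ (Kset_int D _) (Kset_nat_sqrtD D c)) phi_int.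
  move=> sum_phi.
  by rewrite mulr2n -sum_phi [RHS]addrC addKr.
rewrite -phi_cs expr2 -(phiM _ _ (Kset_nat_sqrtD D c) (Kset_nat_sqrtD D c)) -phi_int.
congr phi.
by rewrite mulrACA -!expr2 sqrtD_sqr intrM rmorphXn.
Qed.

Lemma phi_varpi_int_mx (c N0 : nat) : admissible D c N0 phi -> int_mx (phi (varpi D c)).
Proof.
move=> adm; have [[_ int_phi] _] := adm _ (ex_intro _ _ (conj (Kset_varpi D c) erefl)).
by apply: int_phi; exists (varpi D c); split=> //; exact: Oc_varpi.
Qed.

End Embedding.

Theorem lemma2p3 (D : int) (c N0 N1 : nat) (phi : algC -> 'M[rat]_2) (h0 : algC) :
  D < 0 -> fund_disc D ->
  (0 < c)%N -> (0 < N0)%N -> (0 < N1)%N -> coprime c (N0 * N1 ^ 2) ->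
  ring_emb D phi -> admissible D c N0 phi ->
  0 < 'Im h0 ->
  (forall a, Kset D a -> a != 0 -> mobius (phi a) h0 = h0) ->
  let y := phi (varpi D c) i0 i1 in
  (forall a : algC, Kset D a <-> exists p q : rat, a = ratr p + ratr q * h0) /\
  (forall a : algC, Oc D c a <-> exists m n : int, a = m%:~R + n%:~R * (ratr y / h0)).
Proof.
move=> D_lt0 _ c_gt0 _ _ _ phi_emb adm Im_h0 h0_fixed y.
set W := phi (varpi D c); set x := W i0 i0; set z := W i1 i0; set w := W i1 i1.
have cD_lt0 : (c%:Z ^+ 2 * D)%:~R < 0 :> rat.
  by rewrite ltrz0 pmulr_rlt0 // exprn_gt0 // ltz_nat.
have [z_neq0 trW discW] := mx2_trace_disc_of_sqr (phi_varpi_sqr phi_emb c) cD_lt0.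
have h0_neq0 : h0 != 0 by apply: contraTneq Im_h0 => ->; rewrite raddf0 ltxx.
have h0_eigen := mobius_fixed (h0_fixed _ (Kset_varpi D c) (varpi_neq0 D_lt0 c_gt0)) h0_neq0.
rewrite -/W -/x -/y -/z -/w in h0_eigen.
set l := ratr z * h0 + ratr w in h0_eigen.
have trW' : ratr x + ratr w = (c%:Z * D)%:~R :> algC by rewrite -rmorphD trW rmorph_int.
have l_sqr : (2 * l - (c%:Z * D)%:~R) ^+ 2 = (c%:Z ^+ 2 * D)%:~R.
  rewrite -trW' (fixed_point_discriminant h0_eigen) -(rmorph_int (@ratr algC)) -discW.
  by rewrite rmorphD rmorphXn rmorphB !rmorphM rmorph_nat.
have l_eigen := sqr_eq_varpi l_sqr.
split.
  have [r [q q_neq0 lE]] := varpi_or_conj_coord c_gt0 l_eigen.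
  apply: (@rat_span_change _ _ _ ((r - w) / z) (q / z)); first by rewrite mulf_neq0 ?invr_eq0.
  rewrite !(rmorphB, rmorphM, fmorphV) /=.
  have -> : ratr r = l - ratr q * sqrtD D by rewrite lE addrK.
  by rewrite /l; field; rewrite fmorph_eq0.
have y_h0 : ratr y / h0 = l - ratr x.
  by apply: (mulIf h0_neq0); rewrite divfK // mulrBl -h0_eigen; ring.
have W_int := phi_varpi_int_mx adm.
have [kx kxE] := ratr_int_mx_entry i0 i0 W_int.
have [kw kwE] := ratr_int_mx_entry i1 i1 W_int.
case: l_eigen => lE.
  by apply: (@int_span_shift _ _ _ (- kx) 1) => //; rewrite y_h0 lE kxE mulrNz mul1r addrC.
apply: (@int_span_shift _ _ _ kw (- 1)) => //.
by rewrite y_h0 lE -trW' kwE kxE; ring.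
Qed.
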